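(* Assume (A2) and a congestion game payoff structure with continuously differentiable, nonincreasing resource rewards $w_r$. Then the set of mixed stationary Nash equilibria of the mean field game is compact and convex. If moreover every $w_r$ is strictly decreasing, the equilibrium resource flows $\sigma_r$, $r\in\mathcal R$, are the same at every mixed stationary Nash equilibrium.
   Context: Model: classes $c\in[C]$ with masses $m^c>0$, finite state sets $\mathcal S^c$, nonempty finite admissible action sets $\mathcal A^c(s)$, transition kernels $\phi^c(\cdot\mid s,a)$. $\mathcal U^c_D$ = deterministic policies (maps $s\mapsto u(s)\in\mathcal A^c(s)$). $\phi^{c,u}_{ss'}=\phi^c(s\mid s',u(s'))$. (A2): for all $c,u\in\mathcal U^c_D$, $\phi^{c,u}$ has exactly one recurrent communicating class; $\eta^{c,u}$ is the unique stationary distribution of the continuous-time chain with generator $\lambda(\phi^{c,u}-I)$. Congestion game payoff structure: common action rate $\lambda>0$; finite resource set $\mathcal R$; each action is a subset of $\mathcal R$; $w_r:\mathbb R_{\ge0}\to\mathbb R$; for a state-action distribution $\nu$ the flow is $\sigma_r=\lambda\sum_c\sum_s\sum_{a\ni r}\nu^c[s,a]$ and $r^c(s,a,\nu)=\sum_{r\in a}w_r(\sigma_r)$. State-policy distributions: $X=\prod_c\{\mu^c\in\mathbb R_{\ge0}^{\mathcal S^c\times\mathcal U^c_D}:\sum\mu^c=m^c\}$; $\mu^c_{\mathcal S\times\mathcal A}[s,a]=\sum_u\mu^c[s,u]\mathbf 1[u(s)=a]$; $\mu^c[\mathcal S^c,u]=\sum_s\mu^c[s,u]$; $F^c_u(\mu)=\sum_s\eta^{c,u}(s)r^c(s,u(s),\mu_{\mathcal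 S\times\mathcal A})$. MSNE: $\mu\in X$ such that for all $c,u$: (i) $\mu^c[\mathcal S^c,u]>0\Rightarrow F^c_u(\mu)\ge F^c_v(\mu)\ \forall v\in\mathcal U^c_D$; (ii) $\mu^c[s,u]=\eta^{c,u}(s)\mu^c[\mathcal S^c,u]$ for all $s$. The flows at an MSNE $\mu$ are $\sigma_r$ computed from $\mu_{\mathcal S\times\mathcal A}$. *)

From HB Require Import structures.
From mathcomp Require Import all_boot all_order all_algebra.
From mathcomp Require Import all_classical all_reals all_analysis.
Set Implicit Arguments.
Unset Strict Implicit.
Unset Printing Implicit Defensive.
Import Order.TTheory GRing.Theory Num.Theory.
Import numFieldNormedType.Exports.
Local Open Scope ring_scope.

Record game (R : realType) := Game {
  ncls : nat;
  res : finType;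
  st : 'I_ncls -> finType;
  act : forall c, st c -> {set {set res}};
  kern : forall c, st c -> {set res} -> st c -> R;
      (* kern c s a s' = phi^c(s' | s, a) : probability to jump from s to s'
         when playing a in s *)
  mass : 'I_ncls -> R;
  rate : R;
  wr : forall r : res, R -> R
}.
Arguments ncls {R} g.
Arguments res {R} g.
Arguments st {R} g c.
Arguments mass {R} g c.
Arguments rate {R} g.
Arguments wr {R} g r _.
Arguments act {R} g {c} s.
Arguments kern {R} g {c} s a s'.

Section GameDefs.
Variables (R : realType) (G : game R).

Local Notation C := (ncls G).
Local Notation S := (st G).
Local Notation Res := (res G).

Definition wf_game : Prop :=
  (forall c, 0 < mass G c) /\ 0 < rate G /\
  (forall c (s : S c), act G s != finset.set0) /\
  (forall c (s : S c) a, a \in act G s ->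
     (forall s', 0 <= kern G s a s') /\ \sum_(s' : S c) kern G s a s' = 1).

Definition pol (c : 'I_C) :=
  {u : {ffun S c -> {set Res}} | [forall s, u s \in act G s]}.

Definition polf (c : 'I_C) (u : pol c) (s : S c) : {set Res} := sval u s.

Definition phiu (c : 'I_C) (u : pol c) (s s' : S c) : R :=
  kern G s' (polf u s') s.

(* Generator lambda (phi^{c,u} - I) of the continuous-time chain, written as
   Q(s', s) = rate of jumping from s' to s. *)
Definition gen (c : 'I_C) (u : pol c) (s' s : S c) : R :=
  rate G * (phiu u s s' - (s' == s)%:R).

Definition is_stationary (c : 'I_C) (u : pol c) (eta : S c -> R) : Prop :=
  (forall s, 0 <= eta s) /\ \sum_s eta s = 1 /\
  (forall s, \sum_(s' : S c) eta s' * gen u s' s = 0).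

(* eta^{c,u}: the (under (A2) unique) stationary distribution. *)
Definition eta (c : 'I_C) (u : pol c) : S c -> R :=
  match pselect (exists e, is_stationary u e) with
  | left h => projT1 (cid h)
  | right _ => fun _ => 0
  end.

Definition edge (c : 'I_C) (u : pol c) : rel (S c) :=
  fun s s' => 0 < phiu u s' s.

Definition recurrent (c : 'I_C) (u : pol c) (s : S c) : bool :=
  [forall s', connect (edge u) s s' ==> connect (edge u) s' s].

Definition comm_class (c : 'I_C) (u : pol c) (s : S c) : {set S c} :=
  [set s' | connect (edge u) s s' && connect (edge u) s' s].

Definition recurrent_classes (c : 'I_C) (u : pol c) : {set {set S c}} :=
  [set comm_class u s | s in [set s | recurrent u s]].

Definition A2 : Prop :=
  forall c (u : pol c), #|recurrent_classes u| = 1%N.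

Definition idx := {c : 'I_C & (S c * pol c)%type}.

Definition mu_at (mu : idx -> R) (c : 'I_C) (s : S c) (u : pol c) : R :=
  mu (existT _ c (s, u)).

Definition Xset : set (idx -> R) :=
  [set mu : idx -> R | (forall i, 0 <= mu i) /\
            forall c, \sum_(s : S c) \sum_(u : pol c) mu_at mu s u = mass G c]%classic.

Definition muSA (mu : idx -> R) (c : 'I_C) (s : S c) (a : {set Res}) : R :=
  \sum_(u : pol c | polf u s == a) mu_at mu s u.

Definition muS (mu : idx -> R) (c : 'I_C) (u : pol c) : R :=
  \sum_(s : S c) mu_at mu s u.

Definition flow (mu : idx -> R) (r : Res) : R :=
  rate G * \sum_(c < C) \sum_(s : S c) \sum_(a in act G s | r \in a) muSA mu s a.

Definition reward (mu : idx -> R) (a : {set Res}) : R :=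
  \sum_(r in a) wr G r (flow mu r).

Definition Fpay (mu : idx -> R) (c : 'I_C) (u : pol c) : R :=
  \sum_(s : S c) eta u s * reward mu (polf u s).

Definition MSNE : set (idx -> R) :=
  [set mu : idx -> R | Xset mu /\
     forall c (u : pol c),
       (0 < muS mu u -> forall v : pol c, Fpay mu v <= Fpay mu u) /\
       (forall s, mu_at mu s u = eta u s * muS mu u)]%classic.

End GameDefs.
Arguments Xset {R} G _.
Arguments MSNE {R} G _.
Arguments flow {R} G mu r.
Arguments Fpay {R} G mu {c} u.
Arguments eta {R} G {c} u s.
Arguments muS {R} G mu {c} u.
Arguments muSA {R} G mu {c} s a.
Arguments mu_at {R} G mu {c} s u.
Arguments reward {R} G mu a.

Local Open Scope classical_set_scope.
Definition C1_on_nonneg (R : realType) (f : R -> R) : Prop :=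
  (forall x : R, 0 <= x -> derivable f x 1) /\
  {within `[0, +oo[%classic, continuous f^`()}.

Definition nonincreasing_on_nonneg (R : realType) (f : R -> R) : Prop :=
  {in `[0, +oo[ &, {homo f : x y /~ x <= y}}.

Definition decreasing_on_nonneg (R : realType) (f : R -> R) : Prop :=
  {in `[0, +oo[ &, {homo f : x y /~ x < y}}.

From Pilot Require Import Defs.
From HB Require Import structures.
From mathcomp Require Import all_boot all_order all_algebra.
From mathcomp Require Import all_classical all_reals all_analysis.
From mathcomp Require Import ring lra.
Import Order.TTheory GRing.Theory Num.Theory.
Import numFieldNormedType.Exports.
Local Open Scope ring_scope.
Local Open Scope classical_set_scope.
Set Implicit Arguments.
Unset Strict Implicit.

(* Equilibria solve a monotone variational inequality.  If mu is an
   equilibrium and nu in X satisfies condition (ii), then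
     lambda * sum_u F_u(mu) nu[S, u] = sum_r w_r(sigma_r(mu)) sigma_r(nu),
   and condition (i) makes this pairing maximal at nu = mu.  Adding the two
   inequalities obtained for equilibria mu1, mu2 gives
     sum_r (w_r(sigma_r(mu1)) - w_r(sigma_r(mu2)))
           * (sigma_r(mu1) - sigma_r(mu2)) >= 0,
   while every summand is <= 0 because w_r is nonincreasing.  So every summand
   vanishes: w_r(sigma_r) is the same at all equilibria, and so is sigma_r when
   w_r is strictly decreasing.  The flows of a convex combination lie between
   the two flows, so the rewards, hence the payoffs F_u, are constant along a
   segment of equilibria, and conditions (i) and (ii) persist: the set of
   equilibria is convex.  It is closed in the product topology because the
   payoffs are continuous, and it lies in the compact box
   prod_{(c, s, u)} [0, m^c]. *)

Section ClosureInequalities.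
Context {R : realFieldType} {T : topologicalType}.
Variables (A : set T) (x : T).
Hypothesis Ax : closure A x.

Lemma closure_ge0_if_gt0 (f g : T -> R) :
  f @ x --> f x -> g @ x --> g x ->
  (forall y, A y -> 0 < g y -> 0 <= f y) -> 0 < g x -> 0 <= f x.
Proof.
move=> cf cg hA gx_gt0; rewrite leNgt; apply/negP => fx_lt0.
have fneg : \forall y \near x, f y < 0 :=
  @cvgr_lt _ _ _ (nbhs_filter x) f _ cf _ fx_lt0.
have gpos : \forall y \near x, 0 < g y :=
  @cvgr_gt _ _ _ (nbhs_filter x) g _ cg _ gx_gt0.
have [y [Ay [fy_lt0 gy_gt0]]] := Ax (filterI fneg gpos).
by have := hA y Ay gy_gt0; rewrite leNgt fy_lt0.
Qed.

Lemma closure_ge0 (f : T -> R) :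
  f @ x --> f x -> (forall y, A y -> 0 <= f y) -> 0 <= f x.
Proof.
move=> cf hA; apply: (@closure_ge0_if_gt0 f (fun=> 1)) => //.
- exact: cvg_cst.
- by move=> y Ay _; apply: hA.
Qed.

Lemma closure_eq (f g : T -> R) :
  f @ x --> f x -> g @ x --> g x -> (forall y, A y -> f y = g y) -> f x = g x.
Proof.
move=> cf cg hA; apply/eqP; rewrite eq_le -subr_ge0 -[g x <= f x]subr_ge0.
apply/andP; split.
- apply: (@closure_ge0 (fun y => g y - f y)); first exact: cvgB.
  by move=> y Ay; rewrite hA // subrr.
- apply: (@closure_ge0 (fun y => f y - g y)); first exact: cvgB.
  by move=> y Ay; rewrite hA // subrr.
Qed.

End ClosureInequalities.

Section MonotoneRewards.
Variables (R : realType) (w : R -> R).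

Lemma in_itv_nonneg (a : R) : 0 <= a -> a \in `[0, +oo[.
Proof. by move=> a_ge0; rewrite inE /= in_itv /= a_ge0. Qed.

Lemma nonincreasing_subr_mul_le0 : nonincreasing_on_nonneg w ->
  forall a b, 0 <= a -> 0 <= b -> (w a - w b) * (a - b) <= 0.
Proof.
move=> wmono a b a_ge0 b_ge0.
have [ab|ba] := leP a b.
  have : w b <= w a by apply: wmono => //; exact: in_itv_nonneg.
  by move=> wba; apply: mulr_ge0_le0; rewrite ?subr_ge0 ?subr_le0.
have : w a <= w b by apply: wmono; rewrite ?in_itv_nonneg // ltW.
by move=> wab; apply: mulr_le0_ge0; rewrite ?subr_ge0 ?subr_le0 // ltW.
Qed.

Lemma nonincreasing_eq_conv : nonincreasing_on_nonneg w ->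
  forall a b t, 0 <= a -> 0 <= b -> w a = w b -> 0 <= t <= 1 ->
  w (t * a + (1 - t) * b) = w a.
Proof.
move=> wmono a b t a_ge0 b_ge0 wab /andP[t_ge0 t_le1].
have mono_ab a' b' : 0 <= a' -> a' <= b' -> w b' <= w a'.
  by move=> a'_ge0 ab'; apply: wmono; rewrite ?in_itv_nonneg //; lra.
apply/le_anti/andP; split.
  have [ab|ba] := leP a b.
    by apply: mono_ab; nra.
  by rewrite wab; apply: mono_ab; nra.
have [ab|ba] := leP a b.
  by rewrite wab; apply: mono_ab; nra.
by apply: mono_ab; nra.
Qed.

Lemma decreasing_inj : decreasing_on_nonneg w ->
  forall a b, 0 <= a -> 0 <= b -> w a = w b -> a = b.
Proof.
move=> wdec a b a_ge0 b_ge0 wab.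
have [ab|ba|//] := ltgtP a b.
- have : w b < w a by apply: wdec; rewrite ?in_itv_nonneg.
  by rewrite wab ltxx.
- have : w a < w b by apply: wdec; rewrite ?in_itv_nonneg.
  by rewrite wab ltxx.
Qed.

End MonotoneRewards.

Section Equilibria.
Variables (R : realType) (G : game R).
Local Notation C := (ncls G).

Definition eta_consistent (nu : idx G -> R) : Prop :=
  forall c (u : pol c) s, mu_at G nu s u = Defs.eta G u s * muS G nu u.

Lemma MSNE_eta_consistent mu : MSNE G mu -> eta_consistent mu.
Proof. by move=> [_ h] c u s; case: (h c u). Qed.

Lemma polf_act c (u : pol c) s : polf u s \in act G s.
Proof. by move/forallP: (svalP u) => /(_ s). Qed.

Lemma flow_polE mu r : flow G mu r = rate G * \sum_(c < C) \sum_(s : st G c)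
  \sum_(u : pol c) (r \in polf u s)%:R * mu_at G mu s u.
Proof.
rewrite /flow; congr (_ * _); apply: eq_bigr => c _; apply: eq_bigr => s _.
rewrite /muSA [RHS](bigID (fun u => r \in polf u s)) /= [X in _ + X]big1 ?addr0;
  last by move=> u /negbTE ->; rewrite mul0r.
rewrite (@partition_big _ _ _ _ _ _ _ (fun u => polf u s)
   (fun a => (a \in act G s) && (r \in a))) /=; last first.
  by move=> u ru; rewrite ru polf_act.
apply: eq_bigr => a /andP[_ ra].
rewrite big_mkcond [RHS]big_mkcond; apply: eq_bigr => u _.
by case: eqP => [->|]; rewrite ?ra ?mul1r ?andbF.
Qed.

Lemma sum_Fpay_muS mu nu : eta_consistent nu ->
  rate G * \sum_(c < C) \sum_(u : pol c) Fpay G mu u * muS G nu u =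
  \sum_(r : res G) wr G r (flow G mu r) * flow G nu r.
Proof.
move=> nu_eta; set W := fun r => wr G r (flow G mu r).
transitivity (rate G * \sum_(c < C) \sum_(s : st G c) \sum_(u : pol c)
   \sum_(r : res G) (r \in polf u s)%:R * mu_at G nu s u * W r).
  congr (_ * _); apply: eq_bigr => c _.
  rewrite [RHS]exchange_big /=; apply: eq_bigr => u _.
  rewrite /Fpay mulr_suml; apply: eq_bigr => s _.
  rewrite mulrAC -nu_eta /reward big_mkcond mulr_sumr; apply: eq_bigr => r _.
  by rewrite /W; case: (r \in polf u s); rewrite ?mulr1 ?mul1r ?mulr0 ?mul0r.
under [RHS]eq_bigr do rewrite (flow_polE nu) mulrCA.
rewrite -mulr_sumr; congr (_ * _).
under [RHS]eq_bigr do rewrite mulr_sumr.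
rewrite exchange_big; apply: eq_bigr => c _.
under [RHS]eq_bigr do rewrite mulr_sumr.
rewrite [RHS]exchange_big; apply: eq_bigr => s _.
under [RHS]eq_bigr do rewrite mulr_sumr.
rewrite [RHS]exchange_big; apply: eq_bigr => u _.
by apply: eq_bigr => r _; rewrite mulrC.
Qed.

Lemma Xset_sum_muS mu c : Xset G mu -> \sum_(u : pol c) muS G mu u = mass G c.
Proof. by move=> [_ h]; rewrite /muS exchange_big; apply: h. Qed.

Lemma muS_ge0 mu c (u : pol c) : Xset G mu -> 0 <= muS G mu u.
Proof. by move=> [h _]; apply: sumr_ge0 => s _; apply: h. Qed.

Lemma Xset_le_mass mu i : Xset G mu -> mu i <= mass G (projT1 i).
Proof.
case: i => c [s u] [mu_ge0 mu_mass] /=.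
change (mu_at G mu s u <= mass G c).
rewrite -(mu_mass c) (bigD1 s) //= (bigD1 u) //= -addrA lerDl.
apply: addr_ge0; apply: sumr_ge0 => *; first exact: mu_ge0.
by apply: sumr_ge0 => *; exact: mu_ge0.
Qed.

Lemma eq_Fpay mu nu c (u : pol c) :
  (forall r, wr G r (flow G mu r) = wr G r (flow G nu r)) ->
  Fpay G mu u = Fpay G nu u.
Proof.
move=> eq_w; apply: eq_bigr => s _; congr (_ * _).
by apply: eq_bigr => r _; apply: eq_w.
Qed.

Definition lincomb (a b : R) (x y : idx G -> R) : idx G -> R :=
  fun i => a * x i + b * y i.

Lemma muS_lincomb a b x y c (u : pol c) :
  muS G (lincomb a b x y) u = a * muS G x u + b * muS G y u.
Proof. by rewrite /muS /mu_at /lincomb /= big_split /= -!mulr_sumr. Qed.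

Lemma flow_lincomb a b x y r :
  flow G (lincomb a b x y) r = a * flow G x r + b * flow G y r.
Proof.
rewrite !flow_polE (mulrCA a) (mulrCA b) -mulrDr; congr (_ * _).
rewrite !mulr_sumr -big_split; apply: eq_bigr => c _ /=.
rewrite !mulr_sumr -big_split; apply: eq_bigr => s _ /=.
rewrite !mulr_sumr -big_split; apply: eq_bigr => u _ /=.
by rewrite /mu_at /lincomb mulrDr (mulrCA a) (mulrCA b).
Qed.

Lemma Xset_conv t x y : 0 <= t <= 1 -> Xset G x -> Xset G y ->
  Xset G (lincomb t (1 - t) x y).
Proof.
move=> /andP[t_ge0 t_le1] Xx Xy; split.
  move=> i; apply: addr_ge0; apply: mulr_ge0; rewrite ?subr_ge0 //.
  - exact: Xx.1.
  - exact: Xy.1.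
move=> c; rewrite exchange_big /=.
transitivity (\sum_(u : pol c) muS G (lincomb t (1 - t) x y) u) => //.
under eq_bigr do rewrite muS_lincomb.
rewrite big_split /= -!mulr_sumr !Xset_sum_muS //.
by move: (mass G c) => m; ring.
Qed.

Lemma eta_consistent_lincomb a b x y : eta_consistent x -> eta_consistent y ->
  eta_consistent (lincomb a b x y).
Proof.
move=> x_eta y_eta c u s; rewrite muS_lincomb.
rewrite /mu_at /lincomb -!/(mu_at G _ s u) x_eta y_eta.
by move: (Defs.eta G u s) (muS G x u) (muS G y u) => e p q; ring.
Qed.

Hypothesis wf : wf_game G.

Lemma flow_ge0 mu r : Xset G mu -> 0 <= flow G mu r.
Proof.
move=> [h _]; rewrite flow_polE; apply: mulr_ge0.
  by case: wf => _ [/ltW].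
apply: sumr_ge0 => c _; apply: sumr_ge0 => s _; apply: sumr_ge0 => u _.
by apply: mulr_ge0 => //; apply: h.
Qed.

(* Both sides, multiplied by m^c = sum_u mu[S, u], become double sums over
   pairs of policies (u, v), compared termwise through condition (i). *)
Lemma MSNE_variational_ineq mu nu : MSNE G mu -> Xset G nu ->
  \sum_(c < C) \sum_(u : pol c) Fpay G mu u * muS G nu u <=
  \sum_(c < C) \sum_(u : pol c) Fpay G mu u * muS G mu u.
Proof.
move=> [Xmu best] Xnu; apply: ler_sum => c _.
have mass_gt0 : 0 < mass G c by case: wf.
rewrite -(ler_pM2l mass_gt0).
have -> : mass G c * \sum_(v : pol c) Fpay G mu v * muS G nu v =
   \sum_(u : pol c) \sum_(v : pol c) muS G mu u * (Fpay G mu v * muS G nu v).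
  rewrite -(Xset_sum_muS c Xmu) mulr_suml.
  by apply: eq_bigr => u _; rewrite mulr_sumr.
have -> : mass G c * \sum_(u : pol c) Fpay G mu u * muS G mu u =
   \sum_(u : pol c) \sum_(v : pol c) muS G mu u * (Fpay G mu u * muS G nu v).
  rewrite mulrC mulr_suml; apply: eq_bigr => u _.
  rewrite -(Xset_sum_muS c Xnu) mulr_sumr.
  by apply: eq_bigr => v _; rewrite mulrCA mulrA.
apply: ler_sum => u _; apply: ler_sum => v _.
have := muS_ge0 u Xmu; rewrite le0r => /orP[/eqP ->|mu_u_gt0].
  by rewrite !mul0r.
rewrite ler_pM2l // ler_wpM2r //; first exact: muS_ge0.
by case: (best c u) => /(_ mu_u_gt0).
Qed.

Lemma MSNE_sum_monotone mu1 mu2 : MSNE G mu1 -> MSNE G mu2 ->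
  0 <= \sum_(r : res G) (wr G r (flow G mu1 r) - wr G r (flow G mu2 r)) *
                        (flow G mu1 r - flow G mu2 r).
Proof.
move=> h1 h2.
set P := fun mu nu => rate G * \sum_(c < C) \sum_(u : pol c)
  Fpay G mu u * muS G nu u.
have -> : \sum_r (wr G r (flow G mu1 r) - wr G r (flow G mu2 r)) *
                 (flow G mu1 r - flow G mu2 r) =
          (P mu1 mu1 - P mu1 mu2) + (P mu2 mu2 - P mu2 mu1).
  rewrite /P !sum_Fpay_muS; try exact: MSNE_eta_consistent.
  rewrite -!sumrB -big_split /=; apply: eq_bigr => r _.
  move: (wr G r (flow G mu1 r)) (wr G r (flow G mu2 r)) => w1 w2.
  by move: (flow G mu1 r) (flow G mu2 r) => f1 f2; ring.
have rate_ge0 : 0 <= rate G by case: wf => _ [/ltW].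
by apply: addr_ge0; rewrite -mulrBr mulr_ge0 // subr_ge0;
  apply: MSNE_variational_ineq => //; [exact: h2.1 | exact: h1.1].
Qed.

Hypothesis wr_mono : forall r, nonincreasing_on_nonneg (wr G r).

Lemma MSNE_monotone_term_eq0 mu1 mu2 r : MSNE G mu1 -> MSNE G mu2 ->
  (wr G r (flow G mu1 r) - wr G r (flow G mu2 r)) *
  (flow G mu1 r - flow G mu2 r) = 0.
Proof.
move=> h1 h2.
set D := fun r => (wr G r (flow G mu1 r) - wr G r (flow G mu2 r)) *
                  (flow G mu1 r - flow G mu2 r).
have D_le0 r' : D r' <= 0.
  apply: nonincreasing_subr_mul_le0; first exact: wr_mono.
  - exact: flow_ge0 h1.1.
  - exact: flow_ge0 h2.1.
have sumN_D : \sum_(r' : res G) - D r' = 0.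
  apply/eqP; rewrite eq_le sumr_ge0 ?andbT => [|r' _]; last first.
    by rewrite oppr_ge0.
  by rewrite sumrN oppr_le0; exact: MSNE_sum_monotone.
apply/eqP; rewrite -oppr_eq0; apply/eqP.
by apply: (psumr_eq0P _ sumN_D) => // r' _; rewrite oppr_ge0.
Qed.

Lemma MSNE_wr_flow_eq mu1 mu2 r : MSNE G mu1 -> MSNE G mu2 ->
  wr G r (flow G mu1 r) = wr G r (flow G mu2 r).
Proof.
move=> h1 h2; have /eqP := MSNE_monotone_term_eq0 r h1 h2.
by rewrite mulf_eq0 !subr_eq0 => /orP[/eqP //|/eqP ->].
Qed.

Lemma MSNE_Fpay_eq mu1 mu2 c (u : pol c) : MSNE G mu1 -> MSNE G mu2 ->
  Fpay G mu1 u = Fpay G mu2 u.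
Proof. by move=> h1 h2; apply: eq_Fpay => r; apply: MSNE_wr_flow_eq. Qed.

Lemma MSNE_conv t x y : 0 <= t <= 1 -> MSNE G x -> MSNE G y ->
  MSNE G (lincomb t (1 - t) x y).
Proof.
move=> t01 hx hy; set z := lincomb t (1 - t) x y.
have Fz c (u : pol c) : Fpay G z u = Fpay G x u.
  apply: eq_Fpay => r; rewrite flow_lincomb.
  apply: (nonincreasing_eq_conv (wr_mono r)) => //.
  - exact: flow_ge0 hx.1.
  - exact: flow_ge0 hy.1.
  - exact: MSNE_wr_flow_eq.
split; first exact: Xset_conv hx.1 hy.1.
move=> c u; split; last first.
  by move=> s; apply: eta_consistent_lincomb; exact: MSNE_eta_consistent.
move=> z_u_gt0 v; rewrite !Fz.
have [x_u_gt0|x_u_le0] := ltP 0 (muS G x u).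
  by case: (hx.2 c u) => /(_ x_u_gt0).
have y_u_gt0 : 0 < muS G y u.
  have x_u0 : muS G x u = 0.
    by apply/le_anti; rewrite x_u_le0 muS_ge0 //; exact: hx.1.
  move: z_u_gt0; rewrite muS_lincomb x_u0 mulr0 add0r.
  have := muS_ge0 u hy.1; rewrite le0r => /orP[/eqP ->|//].
  by rewrite mulr0 ltxx.
rewrite !(MSNE_Fpay_eq _ hx hy).
by case: (hy.2 c u) => /(_ y_u_gt0).
Qed.

Lemma MSNE_convex : convex_set (MSNE G).
Proof.
move=> x y l /set_mem hx /set_mem hy; apply/mem_set.
change (MSNE G (lincomb l%:num (1 - l%:num) x y)).
by apply: MSNE_conv => //; apply/andP; split.
Qed.

Lemma MSNE_flow_eq mu1 mu2 r :
  (forall r, decreasing_on_nonneg (wr G r)) ->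
  MSNE G mu1 -> MSNE G mu2 -> flow G mu1 r = flow G mu2 r.
Proof.
move=> wr_dec h1 h2; apply: (decreasing_inj (wr_dec r)).
- exact: flow_ge0 h1.1.
- exact: flow_ge0 h2.1.
- exact: MSNE_wr_flow_eq.
Qed.

End Equilibria.

Section Topology.
Variables (R : realType) (G : game R).
Hypothesis wf : wf_game G.
Hypothesis wr_C1 : forall r, C1_on_nonneg (wr G r).
Local Notation T := {ptws idx G -> R}.

(* Typeclass search for this instance diverges on the product topology. *)
#[local] Instance ptws_nbhs_filter (mu : T) : Filter (nbhs mu) | 0 :=
  nbhs_filter mu.

Lemma cvg_sum_at (mu : T) (I : Type) (s : seq I) (P : pred I)
    (F : I -> T -> R) :
  (forall i, P i -> F i @ mu --> F i mu) ->
  (fun nu => \sum_(i <- s | P i) F i nu) @ mu --> \sum_(i <- s | P i) F i mu.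
Proof. by move=> cF; apply: cvg_big => //; exact: add_continuous. Qed.

Lemma cvg_coord (mu : T) i : (fun nu : T => nu i) @ mu --> mu i.
Proof. exact: (@proj_continuous (idx G) (fun _ => R) i mu). Qed.

Lemma cvg_muS (mu : T) c (u : pol c) :
  (fun nu : T => muS G nu u) @ mu --> muS G mu u.
Proof. by apply: cvg_sum_at => s _; exact: cvg_coord. Qed.

Lemma cvg_flow (mu : T) r : (fun nu : T => flow G nu r) @ mu --> flow G mu r.
Proof.
apply: cvgM; first exact: cvg_cst.
apply: cvg_sum_at => c _; apply: cvg_sum_at => s _; apply: cvg_sum_at => a _.
by apply: cvg_sum_at => u _; exact: cvg_coord.
Qed.

Lemma cvg_Fpay (mu : T) c (u : pol c) : Xset G mu ->
  (fun nu : T => Fpay G nu u) @ mu --> Fpay G mu u.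
Proof.
move=> Xmu; apply: cvg_sum_at => s _; apply: cvgM; first exact: cvg_cst.
apply: cvg_sum_at => r _.
have : {for flow G mu r, continuous (wr G r)}.
  have := (wr_C1 r).1 _ (flow_ge0 wf r Xmu).
  by move=> /derivable1_diffP /differentiable_continuous.
by move/continuous_cvg; apply; exact: cvg_flow.
Qed.

Lemma MSNE_closed : closed (MSNE G : set T).
Proof.
move=> mu mu_cl.
have Xmu : Xset G mu.
  split.
    move=> i; apply: (closure_ge0 (f := fun nu : T => nu i) mu_cl).
      exact: cvg_coord.
    by move=> nu [[nu_ge0 _] _].
  move=> c; apply: (closure_eq (g := fun=> mass G c)
    (f := fun nu : T => \sum_(s : st G c) \sum_(u : pol c) mu_at G nu s u)
    mu_cl).
  - by apply: cvg_sum_at => s _; apply: cvg_sum_at => u _; exact: cvg_coord.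
  - exact: cvg_cst.
  - by move=> nu [[_ nu_mass] _].
split=> // c u; split.
  move=> mu_u_gt0 v; rewrite -subr_ge0.
  apply: (closure_ge0_if_gt0 (f := fun nu : T => Fpay G nu u - Fpay G nu v)
                             (g := fun nu : T => muS G nu u) mu_cl) => //.
  - by apply: cvgB; exact: cvg_Fpay.
  - exact: cvg_muS.
  - move=> nu [_ best] nu_u_gt0; rewrite subr_ge0.
    by case: (best c u) => /(_ nu_u_gt0).
move=> s; apply: (closure_eq (f := fun nu : T => mu_at G nu s u)
  (g := fun nu : T => Defs.eta G u s * muS G nu u) mu_cl).
- exact: cvg_coord.
- by apply: cvgM; [exact: cvg_cst | exact: cvg_muS].
- by move=> nu hnu; apply: MSNE_eta_consistent.
Qed.

Lemma MSNE_compact : compact (MSNE G : set T).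
Proof.
apply: (@subclosed_compact _ _
  [set f : T | forall i, `[0, mass G (projT1 i)]%classic (f i)]).
- exact: MSNE_closed.
- apply: (@tychonoff (idx G) (fun=> R)
    (fun i => `[0, mass G (projT1 i)]%classic)).
  by move=> i; exact: segment_compact.
move=> mu [Xmu _] i /=; rewrite in_itv /= Xset_le_mass // andbT.
exact: Xmu.1.
Qed.

End Topology.

Theorem corollary1 (R : realType) (G : game R) :
  wf_game G -> A2 G ->
  (forall r, C1_on_nonneg (wr G r)) ->
  (forall r, nonincreasing_on_nonneg (wr G r)) ->
  compact (MSNE G : set {ptws idx G -> R}) /\
  convex_set (MSNE G) /\
  ((forall r, decreasing_on_nonneg (wr G r)) ->
   forall mu1 mu2, MSNE G mu1 -> MSNE G mu2 ->
   forall r, flow G mu1 r = flow G mu2 r).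
Proof.
(* (A2) only makes [eta] the stationary distribution; the argument never
   needs its uniqueness. *)
move=> wf _ wr_C1 wr_mono; split; first exact: MSNE_compact.
split; first exact: MSNE_convex.
by move=> wr_dec mu1 mu2 h1 h2 r; exact: MSNE_flow_eq.
Qed.
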